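(* For $l,m,n,u,v\in\mathbb{N}$, \[ \sum_{k=-\infty}^\infty (-1)^k\binom{l+m}{l+k}\binom{m+n}{m+k}\binom{n+l}{n+k}\binom{2u}{u+k} =\frac{(2u)!}{u!}\sum_{k=0}^{\infty} \frac{(l+m+n-k)!}{k!\,(l-k)!\,(m-k)!\,(n-k)!\,(u+k)!}, \] and \[ \sum_{k=-\infty}^\infty (-1)^k\binom{m+n}{m+k}\binom{m+n}{n+k}\binom{u+v}{u+k}\binom{u+v}{v+k} =\binom{u+v}{u}\sum_{k=0}^{\infty} \frac{(m+n)!\,(u+v+k)!}{k!\,(m-k)!\,(n-k)!\,(u+k)!\,(v+k)!}. \]
   Context: Convention: $1/j!=0$ for negative integers $j$, and binomial coefficients $\binom{a}{b}$ with $b<0$ or $b>a$ are $0$. *)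

From mathcomp Require Import all_boot all_order all_algebra.
Set Implicit Arguments. Unset Strict Implicit. Unset Printing Implicit Defensive.
Import Order.TTheory GRing.Theory Num.Theory.
Local Open Scope ring_scope.

Definition binZ (a b : int) : rat :=
  if (0 <= b) && (b <= a) then ('C(`|a|%N, `|b|%N))%:R else 0.

Definition invfact (j : int) : rat :=
  if j < 0 then 0 else ((`|j|%N)`!)%:R^-1.

(* Sum of f k over the integer window -N <= k <= N.  Used for sums over all
   k in Z whose summand is supported in that window. *)
Definition zsum (N : nat) (f : int -> rat) : rat :=
  \sum_(i < (2 * N).+1) f (i%:Z - N%:Z).

From mathcomp Require Import all_boot all_order all_algebra.
From mathcomp Require Import ring zify.
Import Order.TTheory GRing.Theory Num.Theory.
Local Open Scope ring_scope.

(* Write the binomials through inverse factorials, with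
   pm(a,k) = invfact_pm a k = 1 / ((a + k)! (a - k)!).  The products of
   binomials on the left-hand sides are finite linear combinations of the
   pm(j,k), and exchanging the two sums reduces both identities to
     sum_k (-1)^k pm(u,k) pm(j,k) = 1 / (u! j! (u+j)!)   and Dixon's
     sum_k (-1)^k pm(u,k) pm(v,k) pm(j,k)
       = (u+v+j)! / (u! v! j! (u+v)! (u+j)! (v+j)!).
   These four auxiliary identities are proved alike, by creative telescoping:
   the summand satisfies a first-order recurrence in j (or n) up to a
   difference G (k + 1) - G k, where the certificate G (found by Zeilberger's
   algorithm) vanishes at both ends of the range; the closed form satisfies the
   same recurrence and agrees with the sum where the recurrence starts. *)

Lemma invfact_neg (x : int) : x < 0 -> invfact x = 0.
Proof. by rewrite /invfact => ->. Qed.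

Lemma invfact_nat (n : nat) : invfact n = (n`!)%:R^-1.
Proof. by rewrite /invfact ltNge le0z_nat. Qed.

Lemma invfact0 : invfact 0 = 1.
Proof. by rewrite (invfact_nat 0) invr1. Qed.

Lemma natr_fact_neq0 (n : nat) : (n`!)%:R != 0 :> rat.
Proof. by rewrite pnatr_eq0 -lt0n fact_gt0. Qed.

Lemma invfactS (x : int) : invfact x = (x + 1)%:~R * invfact (x + 1).
Proof.
case: x => [n|[|n]].
- rewrite -PoszD addn1 !invfact_nat factS natrM invfM mulrA mulfV ?mul1r //.
  by rewrite pnatr_eq0.
- by rewrite invfact_neg // mul0r.
- by rewrite !invfact_neg ?mulr0 //; lia.
Qed.

Lemma invfact_shift1 (x y : int) : y = x + 1 -> invfact x = y%:~R * invfact y.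
Proof. by move->; apply: invfactS. Qed.

Lemma invfact_shift2 (x y : int) :
  y = x + 2 -> invfact x = (y - 1)%:~R * y%:~R * invfact y.
Proof.
move=> ->; rewrite (invfactS x) (invfactS (x + 1)) mulrA -addrA.
by congr (_ * _ * _); congr (_%:~R); lia.
Qed.

Ltac rebase_invfact x y :=
  first [ rewrite (@congr1 _ _ invfact x y ltac:(lia))
        | rewrite (@invfact_shift1 x y ltac:(lia))
        | rewrite (@invfact_shift2 x y ltac:(lia)) ].

Lemma natr_int (n : nat) (z : int) : z = n :> int -> n%:R = z%:~R :> rat.
Proof. by move->. Qed.

Lemma signzS (k : int) : (-1 : rat) ^ (k + 1) = - (-1) ^ k.
Proof. by rewrite expfzDr ?expr1z ?mulrN1 // oppr_eq0 oner_eq0. Qed.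

Lemma PoszS (n : nat) : n%:Z + 1 = n.+1.
Proof. by rewrite -addn1 PoszD. Qed.

Ltac field_of_ints :=
  rewrite ?signzS ?(intrD, intrN, intrB, mulr1z); by field.

Lemma binZ_add (a b : nat) (k : int) :
  binZ (a + b)%N (a%:Z + k) = ((a + b)`!)%:R * invfact (a%:Z + k) * invfact (b%:Z - k).
Proof.
rewrite /binZ; case: ifPn => [/andP[k_ge k_le] | k_out].
  have [i def_i] : exists i : nat, a%:Z + k = i by exists (absz (a%:Z + k)); lia.
  have le_ia : (i <= a + b)%N by lia.
  have -> : b%:Z - k = (a + b - i)%N by lia.
  rewrite def_i /= !invfact_nat -(bin_fact le_ia) !natrM.
  by field; rewrite !natr_fact_neq0.
have [neg | neg] : a%:Z + k < 0 \/ b%:Z - k < 0 by lia.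
  by rewrite invfact_neg ?mulr0 ?mul0r.
by rewrite (@invfact_neg (b%:Z - k)) ?mulr0.
Qed.

Definition invfact_pm (a k : int) : rat := invfact (a + k) * invfact (a - k).

Lemma invfact_pmN (a k : int) : invfact_pm a (- k) = invfact_pm a k.
Proof. by rewrite /invfact_pm opprK mulrC. Qed.

Lemma invfact_pm_norm (a k : int) :
  invfact_pm a k = invfact (a + `|k|) * invfact (a - `|k|).
Proof. by case: (ger0P k) => _ //; rewrite -invfact_pmN. Qed.

Lemma invfact_pm_eq0 (a k : int) : a < `|k| -> invfact_pm a k = 0.
Proof. by move=> lt_ak; rewrite invfact_pm_norm (@invfact_neg (a - _)) ?mulr0 //; lia. Qed.

Lemma invfact_pm0r (a : int) : invfact_pm a 0 = invfact a ^+ 2.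
Proof. by rewrite /invfact_pm oppr0 addr0. Qed.

Lemma invfact_pm0l (k : int) : k != 0 -> invfact_pm 0 k = 0.
Proof. by move=> nz_k; rewrite invfact_pm_eq0 //; lia. Qed.

Lemma invfact_pmS (a k : int) :
  invfact_pm a k = (a + 1 - k)%:~R * (a + 1 + k)%:~R * invfact_pm (a + 1) k.
Proof.
rewrite /invfact_pm (invfactS (a + k)) (invfactS (a - k)).
have -> : a + k + 1 = a + 1 + k by lia.
have -> : a - k + 1 = a + 1 - k by lia.
ring.
Qed.

Lemma binZ_center (a : nat) (k : int) :
  binZ (2 * a)%N (a%:Z + k) = (((2 * a)`!)%:R) * invfact_pm a k.
Proof. by rewrite mul2n -addnn binZ_add mulrA. Qed.

Lemma binZ_pair (a b : nat) (k : int) :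
  binZ (a + b)%N (a%:Z + k) * binZ (a + b)%N (b%:Z + k)
  = ((a + b)`!)%:R ^+ 2 * invfact_pm a k * invfact_pm b k.
Proof. rewrite {2}addnC !binZ_add addnC /invfact_pm; ring. Qed.

Lemma binZ_triple (l m n : nat) (k : int) :
  binZ (l + m)%N (l%:Z + k) * binZ (m + n)%N (m%:Z + k) * binZ (n + l)%N (n%:Z + k)
  = ((l + m)`!)%:R * ((m + n)`!)%:R * ((n + l)`!)%:R
    * invfact_pm l k * invfact_pm m k * invfact_pm n k.
Proof. rewrite !binZ_add /invfact_pm; ring. Qed.

Lemma sum_ord_supported1 (R : zmodType) (J K : nat) (f : nat -> R) :
  (forall j, j != K -> f j = 0) -> ((J <= K)%N -> f K = 0) ->
  \sum_(j < J) f j = f K.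
Proof.
move=> f_supp f_K; rewrite (bigID (fun j : 'I_J => j == K :> nat)) /=.
rewrite [X in _ + X]big1 ?addr0 => [|j]; last exact: f_supp.
by rewrite big_ord1_eq; case: ltnP => // /f_K.
Qed.

Lemma zsum_delta (N : nat) (f : int -> rat) :
  (forall k, k != 0 -> f k = 0) -> zsum N f = f 0.
Proof.
move=> f_supp; rewrite /zsum (@sum_ord_supported1 _ _ N (fun i => f (i%:Z - N%:Z))).
- by rewrite subrr.
- by move=> j ne_jN; apply: f_supp; apply/eqP; lia.
- lia.
Qed.

Lemma eq_zsum (N : nat) {f g : int -> rat} : f =1 g -> zsum N f = zsum N g.
Proof. by move=> eq_fg; apply: eq_bigr => i _; apply: eq_fg. Qed.

Lemma zsumZ (N : nat) (a : rat) (f : int -> rat) :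
  zsum N (fun k => a * f k) = a * zsum N f.
Proof. by rewrite /zsum mulr_sumr. Qed.

Lemma zsumB (N : nat) (f g : int -> rat) :
  zsum N (fun k => f k - g k) = zsum N f - zsum N g.
Proof. by rewrite /zsum sumrB. Qed.

Lemma zsum_sum (N J : nat) (F : 'I_J -> int -> rat) :
  zsum N (fun k => \sum_(j < J) F j k) = \sum_(j < J) zsum N (F j).
Proof. by rewrite /zsum exchange_big. Qed.

Lemma zsum_telescope (N : nat) (G : int -> rat) :
  zsum N (fun k => G (k + 1) - G k) = G (N%:Z + 1) - G (- N%:Z).
Proof.
rewrite /zsum -(big_mkord xpredT (fun i => G (i%:Z - N%:Z + 1) - G (i%:Z - N%:Z))).
rewrite (telescope_sumr_eq (fun i : nat => G (i%:Z - N%:Z))) //.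
  by congr (G _ - G _); lia.
by move=> i _ /=; congr (G _ - _); lia.
Qed.

Lemma zsum_recurrence (N : nat) (a b : rat) (F1 F0 G : int -> rat) :
  (forall k, a * F1 k - b * F0 k = G (k + 1) - G k) ->
  G (N%:Z + 1) = 0 -> G (- N%:Z) = 0 ->
  a * zsum N F1 = b * zsum N F0.
Proof.
move=> step G_hi G_lo; apply/eqP; rewrite -subr_eq0 -!zsumZ -zsumB.
by rewrite (eq_zsum _ step) zsum_telescope G_hi G_lo subrr.
Qed.

Lemma sum_ord_recurrence (J : nat) (a b : rat) (F1 F0 G : nat -> rat) :
  (forall j, a * F1 j - b * F0 j = G j.+1 - G j) -> G J = 0 -> G 0%N = 0 ->
  a * \sum_(j < J) F1 j = b * \sum_(j < J) F0 j.
Proof.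
move=> step G_hi G_lo; apply/eqP; rewrite -subr_eq0 !mulr_sumr -sumrB.
rewrite (eq_bigr (fun j : 'I_J => G j.+1 - G j)) => [|j _]; last exact: step.
by rewrite -(big_mkord xpredT (fun j => G j.+1 - G j)) telescope_sumr // G_hi G_lo subrr.
Qed.

Lemma eq_from_recurrence (R : idomainType) (S T c d : nat -> R) (K : nat) :
  (forall n, (n < K)%N -> S n = T n) -> S K = T K ->
  (forall n, c n * S n.+1 = d n * S n) -> (forall n, c n * T n.+1 = d n * T n) ->
  (forall n, (K <= n)%N -> c n != 0) ->
  S =1 T.
Proof.
move=> eq_lt eq_K recS recT c_nz n; case: (ltnP n K) => [/eq_lt // | le_Kn].
rewrite -(subnKC le_Kn); elim: (n - K)%N => [|t IHt]; first by rewrite addn0.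
by rewrite addnS; apply: (mulfI (c_nz _ (leq_addr t K))); rewrite recS recT IHt.
Qed.

Definition alt_pm2_cert (u j k : int) : rat :=
  - 2^-1 * (-1) ^ k * invfact (u + k - 1) * invfact (u - k)
  * invfact (j + k) * invfact (j + 1 - k).

Lemma alt_pm2_step (u j k : int) :
  (j + 1)%:~R * (u + j + 1)%:~R * ((-1) ^ k * invfact_pm u k * invfact_pm (j + 1) k)
  - (-1) ^ k * invfact_pm u k * invfact_pm j k
  = alt_pm2_cert u j (k + 1) - alt_pm2_cert u j k.
Proof.
rewrite /invfact_pm /alt_pm2_cert.
rebase_invfact (u + k) (u + k + 1). rebase_invfact (u - k) (u - k + 1).
rebase_invfact (j + 1 + k) (j + k + 1). rebase_invfact (j + k) (j + k + 1).
rebase_invfact (j - k) (j + 1 - k). rebase_invfact (u + (k + 1) - 1) (u + k + 1).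
rebase_invfact (u - (k + 1)) (u - k + 1). rebase_invfact (j + (k + 1)) (j + k + 1).
rebase_invfact (j + 1 - (k + 1)) (j + 1 - k). rebase_invfact (u + k - 1) (u + k + 1).
field_of_ints.
Qed.

Lemma alt_pm2_sum (u j N : nat) : (u <= N)%N ->
  zsum N (fun k => (-1) ^ k * invfact_pm u k * invfact_pm j k)
  = invfact u * invfact j * invfact (u%:Z + j%:Z).
Proof.
move=> le_uN; move: j.
pose S (j : nat) := zsum N (fun k => (-1) ^ k * invfact_pm u k * invfact_pm j%:Z k).
pose T (j : nat) := invfact u * invfact j * invfact (u%:Z + j%:Z).
pose c (j : nat) := ((j%:Z + 1)%:~R * (u%:Z + j%:Z + 1)%:~R : rat).
apply: (@eq_from_recurrence _ S T c (fun=> 1) 0) => // [|j|j|j _].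
- rewrite /S /T zsum_delta => [|k nz_k]; last by rewrite invfact_pm0l ?mulr0.
  by rewrite expr0z mul1r !invfact_pm0r invfact0 addr0; ring.
- rewrite mul1r /c /S -PoszS -[RHS]mul1r.
  apply: (@zsum_recurrence N _ 1 _ _ (alt_pm2_cert u j)) => [k||].
  + by rewrite mul1r alt_pm2_step.
  + by rewrite /alt_pm2_cert (@invfact_neg (u%:Z - _)) ?mulr0 ?mul0r //; lia.
  + by rewrite /alt_pm2_cert (@invfact_neg (_ - 1)) ?mulr0 ?mul0r //; lia.
- rewrite /T mul1r /c -PoszS.
  rebase_invfact (Posz j) (j%:Z + 1). rebase_invfact (u%:Z + j%:Z) (u%:Z + (j%:Z + 1)).
  field_of_ints.
- by rewrite /c mulf_neq0 // intr_eq0; lia.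
Qed.

Definition dixon_cert (u v j k : int) : rat :=
  - 2^-1 * (-1) ^ k * invfact (u + k - 1) * invfact (u - k)
  * invfact (v + k - 1) * invfact (v - k) * invfact (j + k) * invfact (j + 1 - k).

Lemma dixon_step (u v j k : int) :
  (j + 1)%:~R * (u + j + 1)%:~R * (v + j + 1)%:~R
    * ((-1) ^ k * invfact_pm u k * invfact_pm v k * invfact_pm (j + 1) k)
  - (u + v + j + 1)%:~R * ((-1) ^ k * invfact_pm u k * invfact_pm v k * invfact_pm j k)
  = dixon_cert u v j (k + 1) - dixon_cert u v j k.
Proof.
rewrite /invfact_pm /dixon_cert.
rebase_invfact (u + k) (u + k + 1). rebase_invfact (u - k) (u - k + 1).
rebase_invfact (v + k) (v + k + 1). rebase_invfact (v - k) (v - k + 1).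
rebase_invfact (j + 1 + k) (j + k + 1). rebase_invfact (j + k) (j + k + 1).
rebase_invfact (j - k) (j + 1 - k).
rebase_invfact (u + (k + 1) - 1) (u + k + 1). rebase_invfact (u - (k + 1)) (u - k + 1).
rebase_invfact (v + (k + 1) - 1) (v + k + 1). rebase_invfact (v - (k + 1)) (v - k + 1).
rebase_invfact (j + (k + 1)) (j + k + 1). rebase_invfact (j + 1 - (k + 1)) (j + 1 - k).
rebase_invfact (u + k - 1) (u + k + 1). rebase_invfact (v + k - 1) (v + k + 1).
field_of_ints.
Qed.

Lemma dixon_sum (u v j N : nat) : (u <= N)%N ->
  zsum N (fun k => (-1) ^ k * invfact_pm u k * invfact_pm v k * invfact_pm j k)
  = ((u + v + j)`!)%:R * invfact u * invfact v * invfact j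
    * invfact (u%:Z + v%:Z) * invfact (u%:Z + j%:Z) * invfact (v%:Z + j%:Z).
Proof.
move=> le_uN; move: j.
pose S (j : nat) :=
  zsum N (fun k => (-1) ^ k * invfact_pm u k * invfact_pm v k * invfact_pm j k).
pose T (j : nat) := ((u + v + j)`!)%:R * invfact u * invfact v * invfact j
  * invfact (u%:Z + v%:Z) * invfact (u%:Z + j%:Z) * invfact (v%:Z + j%:Z).
pose c (j : nat) :=
  ((j%:Z + 1)%:~R * (u%:Z + j%:Z + 1)%:~R * (v%:Z + j%:Z + 1)%:~R : rat).
pose d (j : nat) := ((u%:Z + v%:Z + j%:Z + 1)%:~R : rat).
apply: (@eq_from_recurrence _ S T c d 0) => // [|j|j|j _].
- rewrite /S /T zsum_delta => [|k nz_k]; last by rewrite invfact_pm0l ?mulr0.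
  rebase_invfact (u%:Z + v%:Z) (Posz (u + v)).
  rewrite expr0z mul1r !invfact_pm0r invfact0 !addr0 addn0 !invfact_nat.
  by field; rewrite !natr_fact_neq0.
- rewrite /c /d /S -PoszS.
  apply: (@zsum_recurrence N _ _ _ _ (dixon_cert u v j)) => [k||]; first exact: dixon_step.
  + by rewrite /dixon_cert (@invfact_neg (u%:Z - _)) ?mulr0 ?mul0r //; lia.
  + by rewrite /dixon_cert (@invfact_neg (u%:Z + _ - 1)) ?mulr0 ?mul0r //; lia.
- rewrite /T /c /d -PoszS addnS factS natrM (@natr_int _ (u%:Z + v%:Z + j%:Z + 1)); last lia.
  rebase_invfact (Posz j) (j%:Z + 1). rebase_invfact (u%:Z + j%:Z) (u%:Z + (j%:Z + 1)).
  rebase_invfact (v%:Z + j%:Z) (v%:Z + (j%:Z + 1)).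
  field_of_ints.
- by rewrite /c !mulf_neq0 // intr_eq0; lia.
Qed.

Definition pm2_term (m n k j : int) : rat :=
  invfact (m - j) * invfact (n - j) * invfact_pm j k.

Definition pm2_cert (m n k j : int) : rat :=
  - (invfact (m - j) * invfact (n + 1 - j) * invfact_pm (j - 1) k).

Lemma pm2_step (m n k j : int) :
  (n + 1 - k)%:~R * (n + 1 + k)%:~R * pm2_term m (n + 1) k j
  - (m + n + 1)%:~R * pm2_term m n k j
  = pm2_cert m n k (j + 1) - pm2_cert m n k j.
Proof.
rewrite /pm2_term /pm2_cert /invfact_pm.
rebase_invfact (n - j) (n + 1 - j).
rebase_invfact (m - (j + 1)) (m - j). rebase_invfact (n + 1 - (j + 1)) (n + 1 - j).
rebase_invfact (j + 1 - 1 + k) (j + k). rebase_invfact (j + 1 - 1 - k) (j - k).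
rebase_invfact (j - 1 + k) (j + k). rebase_invfact (j - 1 - k) (j - k).
field_of_ints.
Qed.

Lemma pm2_linearization (m n J : nat) (k : int) : (m < J)%N ->
  ((m + n)`!)%:R * invfact_pm m k * invfact_pm n k = \sum_(j < J) pm2_term m n k j.
Proof.
move=> lt_mJ; move: n; set K := `|k|%N.
pose T (n : nat) := ((m + n)`!)%:R * invfact_pm m k * invfact_pm n k.
pose S (n : nat) := \sum_(j < J) pm2_term m n k j.
pose c (n : nat) := ((n%:Z + 1 - k)%:~R * (n%:Z + 1 + k)%:~R : rat).
pose d (n : nat) := ((m%:Z + n%:Z + 1)%:~R : rat).
apply: (@eq_from_recurrence _ T S c d K) => [n lt_nK||n|n|n le_Kn].
- rewrite /T /S (@invfact_pm_eq0 n) ?mulr0; last lia.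
  rewrite big1 // => j _; rewrite /pm2_term; case: (leqP j n) => [le_jn | lt_nj].
    by rewrite invfact_pm_eq0 ?mulr0 //; lia.
  by rewrite (@invfact_neg (n%:Z - j%:Z)) ?mulr0 ?mul0r //; lia.
- rewrite /T /S (@sum_ord_supported1 _ _ K (pm2_term m K k)) => [|j ne_jK|le_JK].
  + rewrite /pm2_term subrr invfact0 mulr1 !(invfact_pm_norm _ k).
    have -> : `|k| = K%:Z by lia.
    rebase_invfact (m%:Z + K%:Z) (Posz (m + K)).
    by rewrite !invfact_nat; field; rewrite !natr_fact_neq0.
  + rewrite /pm2_term; case: (ltnP j K) => [lt_jK | le_Kj].
      by rewrite invfact_pm_eq0 ?mulr0 //; lia.
    by rewrite (@invfact_neg (K%:Z - j%:Z)) ?mulr0 ?mul0r //; lia.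
  + by rewrite /pm2_term (@invfact_neg (m%:Z - K%:Z)) ?mul0r //; lia.
- rewrite /T /c /d -PoszS addnS factS natrM (@natr_int (m + n).+1 (m%:Z + n%:Z + 1)); last lia.
  rewrite (invfact_pmS n); ring.
- rewrite /S /c /d -PoszS.
  apply: (@sum_ord_recurrence J _ _ (fun j : nat => pm2_term m (n%:Z + 1) k j)
    (fun j : nat => pm2_term m n k j) (fun j : nat => pm2_cert m n k j)) => [j||].
  + by rewrite -PoszS pm2_step.
  + by rewrite /pm2_cert (@invfact_neg (m%:Z - J%:Z)) ?mul0r ?oppr0 //; lia.
  + by rewrite /pm2_cert invfact_pm_eq0 ?mulr0 ?oppr0 //; lia.
- by rewrite /c mulf_neq0 // intr_eq0; lia.
Qed.

Definition pm3_term (l m n : nat) (k : int) (j : nat) : rat :=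
  ((l + m + n - j)`!)%:R * invfact (l%:Z - j%:Z) * invfact (m%:Z - j%:Z)
  * invfact (n%:Z - j%:Z) * invfact_pm j k.

Definition pm3_cert (l m n : nat) (k : int) (j : nat) : rat :=
  - (((l + m + n.+1 - j)`!)%:R * invfact (l%:Z - j%:Z) * invfact (m%:Z - j%:Z)
     * invfact (n%:Z + 1 - j%:Z) * invfact_pm (j%:Z - 1) k).

Lemma pm3_step (l m n : nat) (k : int) (j : nat) :
  (n%:Z + 1 - k)%:~R * (n%:Z + 1 + k)%:~R * pm3_term l m n.+1 k j
  - (m%:Z + n%:Z + 1)%:~R * (n%:Z + l%:Z + 1)%:~R * pm3_term l m n k j
  = pm3_cert l m n k j.+1 - pm3_cert l m n k j.
Proof.
rewrite /pm3_term /pm3_cert /invfact_pm -!PoszS.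
(* For l < j the truncated factorials are junk, but then invfact (l - j) = 0. *)
case: (leqP j l) => [le_jl | lt_lj]; last first.
  rewrite (@invfact_neg (l%:Z - j%:Z)) 1?(@invfact_neg (l%:Z - (j%:Z + 1))); try lia.
  by rewrite !(mulr0, mul0r, oppr0, subrr).
have -> : (l + m + n.+1 - j.+1 = l + m + n - j)%N by lia.
have -> : (l + m + n.+1 - j = (l + m + n - j).+1)%N by lia.
rewrite factS natrM (@natr_int (l + m + n - j).+1 (l%:Z + m%:Z + n%:Z + 1 - j%:Z)); last lia.
rebase_invfact (n%:Z - j%:Z) (n%:Z + 1 - j%:Z).
rebase_invfact (l%:Z - (j%:Z + 1)) (l%:Z - j%:Z).
rebase_invfact (m%:Z - (j%:Z + 1)) (m%:Z - j%:Z).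
rebase_invfact (n%:Z + 1 - (j%:Z + 1)) (n%:Z + 1 - j%:Z).
rebase_invfact (j%:Z + 1 - 1 + k) (j%:Z + k). rebase_invfact (j%:Z + 1 - 1 - k) (j%:Z - k).
rebase_invfact (j%:Z - 1 + k) (j%:Z + k). rebase_invfact (j%:Z - 1 - k) (j%:Z - k).
field_of_ints.
Qed.

Lemma pm3_linearization (l m n J : nat) (k : int) : (l < J)%N ->
  ((l + m)`!)%:R * ((m + n)`!)%:R * ((n + l)`!)%:R
    * invfact_pm l k * invfact_pm m k * invfact_pm n k
  = \sum_(j < J) pm3_term l m n k j.
Proof.
move=> lt_lJ; move: n; set K := `|k|%N.
pose T (n : nat) := ((l + m)`!)%:R * ((m + n)`!)%:R * ((n + l)`!)%:R
  * invfact_pm l k * invfact_pm m k * invfact_pm n k.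
pose S (n : nat) := \sum_(j < J) pm3_term l m n k j.
pose c (n : nat) := ((n%:Z + 1 - k)%:~R * (n%:Z + 1 + k)%:~R : rat).
pose d (n : nat) := ((m%:Z + n%:Z + 1)%:~R * (n%:Z + l%:Z + 1)%:~R : rat).
apply: (@eq_from_recurrence _ T S c d K) => [n lt_nK||n|n|n le_Kn].
- rewrite /T /S (@invfact_pm_eq0 n) ?mulr0; last lia.
  rewrite big1 // => j _; rewrite /pm3_term; case: (leqP j n) => [le_jn | lt_nj].
    by rewrite invfact_pm_eq0 ?mulr0 //; lia.
  by rewrite (@invfact_neg (n%:Z - j%:Z)) ?mulr0 ?mul0r //; lia.
- rewrite /T /S (@sum_ord_supported1 _ _ K (pm3_term l m K k)) => [|j ne_jK|le_JK].
  + rewrite /pm3_term addnK subrr invfact0 mulr1 !(invfact_pm_norm _ k).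
    have -> : `|k| = K%:Z by lia.
    rebase_invfact (m%:Z + K%:Z) (Posz (m + K)).
    rebase_invfact (l%:Z + K%:Z) (Posz (K + l)).
    by rewrite !invfact_nat; field; rewrite !natr_fact_neq0.
  + rewrite /pm3_term; case: (ltnP j K) => [lt_jK | le_Kj].
      by rewrite invfact_pm_eq0 ?mulr0 //; lia.
    by rewrite (@invfact_neg (K%:Z - j%:Z)) ?mulr0 ?mul0r //; lia.
  + by rewrite /pm3_term (@invfact_neg (l%:Z - K%:Z)) ?mulr0 ?mul0r //; lia.
- rewrite /T /c /d addnS addSn !factS !natrM.
  rewrite (@natr_int (m + n).+1 (m%:Z + n%:Z + 1)) 1?(@natr_int (n + l).+1 (n%:Z + l%:Z + 1)); try lia.
  rewrite (invfact_pmS n) PoszS; ring.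
- rewrite /S /c /d.
  apply: (@sum_ord_recurrence J _ _ (pm3_term l m n.+1 k) (pm3_term l m n k)
    (pm3_cert l m n k)) => [j||]; first exact: pm3_step.
  + by rewrite /pm3_cert (@invfact_neg (l%:Z - J%:Z)) ?mulr0 ?mul0r ?oppr0 //; lia.
  + by rewrite /pm3_cert invfact_pm_eq0 ?mulr0 ?oppr0 //; lia.
- by rewrite /c mulf_neq0 // intr_eq0; lia.
Qed.

Lemma natr_binomial_invfact (a b : nat) :
  ('C(a + b, a))%:R = ((a + b)`!)%:R * invfact a * invfact b.
Proof.
have := binZ_add a b 0; rewrite addr0 oppr0 addr0 => <-.
by rewrite /binZ ifT //; lia.
Qed.

Lemma alt_binZ_cyclic_triple_sum (l m n u N : nat) : (u <= N)%N ->
  zsum N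
    (fun k : int => (-1 : rat) ^ k
       * binZ (l + m)%N (l%:Z + k) * binZ (m + n)%N (m%:Z + k)
       * binZ (n + l)%N (n%:Z + k) * binZ (2 * u)%N (u%:Z + k))
  = ((2 * u)`!)%:R / (u`!)%:R *
    \sum_(k < (l + m + n).+1)
      ((l + m + n - k)`!)%:R * invfact k * invfact (l%:Z - k%:Z)
        * invfact (m%:Z - k%:Z) * invfact (n%:Z - k%:Z) * invfact (u%:Z + k%:Z).
Proof.
move=> le_uN; set J := (l + m + n).+1.
have lt_lJ : (l < J)%N by rewrite ltnS -addnA leq_addr.
pose coef (j : nat) := ((l + m + n - j)`!)%:R * invfact (l%:Z - j%:Z)
  * invfact (m%:Z - j%:Z) * invfact (n%:Z - j%:Z).
have expand k : (-1) ^ k * binZ (l + m)%N (l%:Z + k) * binZ (m + n)%N (m%:Z + k)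
       * binZ (n + l)%N (n%:Z + k) * binZ (2 * u)%N (u%:Z + k)
    = \sum_(j < J) ((2 * u)`!)%:R * coef j * ((-1) ^ k * invfact_pm u k * invfact_pm j k).
  rewrite [LHS](ACl ((1*(2*3*4))*5)) /= binZ_triple.
  rewrite (@pm3_linearization l m n J k lt_lJ) binZ_center.
  by rewrite mulr_sumr mulr_suml; apply: eq_bigr => j _; rewrite /pm3_term /coef; ring.
rewrite (eq_zsum _ expand) zsum_sum.
under eq_bigr do rewrite zsumZ alt_pm2_sum //.
rewrite mulr_sumr (invfact_nat u); apply: eq_bigr => j _; rewrite /coef; ring.
Qed.

Lemma alt_binZ_double_pair_sum (m n u v N : nat) : (u <= N)%N ->
  zsum N
    (fun k : int => (-1 : rat) ^ k
       * binZ (m + n)%N (m%:Z + k) * binZ (m + n)%N (n%:Z + k)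
       * binZ (u + v)%N (u%:Z + k) * binZ (u + v)%N (v%:Z + k))
  = ('C(u + v, u))%:R *
    \sum_(k < (m + n).+1)
      ((m + n)`!)%:R * ((u + v + k)`!)%:R * invfact k * invfact (m%:Z - k%:Z)
        * invfact (n%:Z - k%:Z) * invfact (u%:Z + k%:Z) * invfact (v%:Z + k%:Z).
Proof.
move=> le_uN; set J := (m + n).+1.
have lt_mJ : (m < J)%N by rewrite ltnS leq_addr.
have expand k : (-1) ^ k * binZ (m + n)%N (m%:Z + k) * binZ (m + n)%N (n%:Z + k)
       * binZ (u + v)%N (u%:Z + k) * binZ (u + v)%N (v%:Z + k)
    = \sum_(j < J) ((m + n)`!)%:R * ((u + v)`!)%:R ^+ 2
        * invfact (m%:Z - j%:Z) * invfact (n%:Z - j%:Z)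
        * ((-1) ^ k * invfact_pm u k * invfact_pm v k * invfact_pm j k).
  rewrite [LHS](ACl (1*(2*3)*(4*5))) /= !binZ_pair.
  have -> : ((m + n)`!)%:R ^+ 2 * invfact_pm m k * invfact_pm n k
      = ((m + n)`!)%:R * (((m + n)`!)%:R * invfact_pm m k * invfact_pm n k) by ring.
  rewrite (@pm2_linearization m n J k lt_mJ).
  by rewrite !(mulr_sumr, mulr_suml); apply: eq_bigr => j _; rewrite /pm2_term; ring.
rewrite (eq_zsum _ expand) zsum_sum.
under eq_bigr do rewrite zsumZ dixon_sum //.
rewrite natr_binomial_invfact mulr_sumr; apply: eq_bigr => j _.
rebase_invfact (u%:Z + v%:Z) (Posz (u + v)).
by rewrite (invfact_nat (u + v)); field; rewrite natr_fact_neq0.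
Qed.

Theorem corollary5p9 (l m n u v : nat) :
  zsum (l + m + n + u)
    (fun k : int => (-1 : rat) ^ k
       * binZ (l + m)%N (l%:Z + k) * binZ (m + n)%N (m%:Z + k)
       * binZ (n + l)%N (n%:Z + k) * binZ (2 * u)%N (u%:Z + k))
  = ((2 * u)`!)%:R / (u`!)%:R *
    \sum_(k < (l + m + n).+1)
      ((l + m + n - k)`!)%:R * invfact k * invfact (l%:Z - k%:Z)
        * invfact (m%:Z - k%:Z) * invfact (n%:Z - k%:Z) * invfact (u%:Z + k%:Z)
  /\
  zsum (m + n + u + v)
    (fun k : int => (-1 : rat) ^ k
       * binZ (m + n)%N (m%:Z + k) * binZ (m + n)%N (n%:Z + k)
       * binZ (u + v)%N (u%:Z + k) * binZ (u + v)%N (v%:Z + k))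
  = ('C(u + v, u))%:R *
    \sum_(k < (m + n).+1)
      ((m + n)`!)%:R * ((u + v + k)`!)%:R * invfact k * invfact (m%:Z - k%:Z)
        * invfact (n%:Z - k%:Z) * invfact (u%:Z + k%:Z) * invfact (v%:Z + k%:Z).
Proof.
by split; [apply: alt_binZ_cyclic_triple_sum | apply: alt_binZ_double_pair_sum]; lia.
Qed.
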